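(* Let $\Omega\subset\mathbb{R}^2$ be a bounded domain, $X\subset\overline{\Omega}$ finite with $X\setminus\partial\Omega\subset\mathrm{int}(\mathrm{conv}(X\cap\partial\Omega))$, and $f_X$ a discrete load on $X$. Assume $(\mathbf{s},\mathbf{q},\mathbf{r})\in\mathbb{R}^{3\times m}$ solves $(\mathcal{P}_X)$ and $(\mathbf{u}_1,\mathbf{u}_2,\mathbf{w})\in\mathbb{R}^{3\times n}$ (with some slack vectors) solves $(\mathcal{P}_X^* )$. Then the pair $$\mathbf{z}=\tfrac12\mathbf{w},\qquad\hat{\mathbf{s}}=\mathbf{J}(\mathbf{z})\mathbf{s}$$ solves problem $(\mathrm{MVGS}_X)$, and $\mathcal{V}_{X,\min}=\mathcal{Z}_X$.
   Context: Discrete setting: $\bar n=\#X$, $n=\#(X\setminus\partial\Omega)$, enumeration $\chi:\{1,\dots,n\}\to X\setminus\partial\Omega$; $m=\bar n(\bar n-1)/2$, enumeration $k\mapsto\{\chi_-(k),\chi_+(k)\}$ of unordered pairs of distinct points of $X$. $f_i=f_X(\{\chi(i)\})$, $l_k=|\chi_+(k)-\chi_-(k)|$. Vectors in $\mathbb{R}^n$ are identified with functions on $X$ vanishing on $X\cap\partial\Omega$. $\mathbf{B}_1,\mathbf{B}_2,\mathbf{D}\in\mathbb{R}^{m\times n}$: $(\mathbf{B}_1\mathbf{u}_1+\mathbf{B}_2\mathbf{u}_2)_k=(u(\chi_+(k))-u(\chi_-(k)))\cdot(\chi_+(k)-\chi_-(k))/l_k$ (with $u=(u_1,u_2)$ in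 a fixed Cartesian basis), $(\mathbf{D}\mathbf{w})_k=w(\chi_+(k))-w(\chi_-(k))$. $\mathrm{K}=\{(t_1,t_2,t_3):t_1,t_2\ge0,2t_1t_2\ge t_3^2\}$. $(\mathcal{P}_X)$: $\inf\{\mathbf{l}^\top\mathbf{s}+2\mathbf{l}^\top\mathbf{r}:\mathbf{s},\mathbf{r}\in\mathbb{R}^m_+,\mathbf{q}\in\mathbb{R}^m,\mathbf{B}_1^\top\mathbf{s}=\mathbf{B}_2^\top\mathbf{s}=\mathbf{0},\mathbf{D}^\top\mathbf{q}=\mathbf{f},(r_k,s_k,q_k)\in\mathrm{K}\ \forall k\}$. $(\mathcal{P}_X^* )$: $\sup\{\mathbf{f}^\top\mathbf{w}:\mathbf{t}_2+\mathbf{B}_1\mathbf{u}_1+\mathbf{B}_2\mathbf{u}_2=\mathbf{l},\mathbf{t}_3+\mathbf{D}\mathbf{w}=\mathbf{0},\mathbf{t}_1=2\mathbf{l},(t_{1;k},t_{2;k},t_{3;k})\in\mathrm{K}\ \forall k\}$ over $\mathbf{u}_1,\mathbf{u}_2,\mathbf{w}\in\mathbb{R}^n$, $\mathbf{t}_1,\mathbf{t}_2\in\mathbb{R}^m_+$, $\mathbf{t}_3\in\mathbb{R}^m$. It is known that $\min\mathcal{P}_X=\max\mathcal{P}_X^*=:\mathcal{Z}_X$. For $\mathbf{z}\in\mathbb{R}^n$: $\Delta_k(\mathbf{z})=(\mathbf{D}\mathbf{z})_k/l_k$, $\mathbf{J}(\mathbf{z})$ diagonal with $J_{kk}(\mathbf{z})=\sqrt{1+\Delta_k(\mathbf{z})^2}$,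 $\hat l_k(\mathbf{z})=J_{kk}(\mathbf{z})l_k$. $(\mathrm{MVGS}_X)$: $\mathcal{V}_{X,\min}=\inf\{\sum_k\hat l_k(\mathbf{z})\hat s_k:\mathbf{z}\in\mathbb{R}^n,\hat{\mathbf{s}}\in\mathbb{R}^m_+,\ \mathbf{B}_1^\top\mathbf{s}=\mathbf{0},\mathbf{B}_2^\top\mathbf{s}=\mathbf{0},\mathbf{D}^\top\mathbf{q}=\mathbf{f}\text{ where }s_k=\hat s_k/J_{kk}(\mathbf{z}),\ q_k=\Delta_k(\mathbf{z})\hat s_k/J_{kk}(\mathbf{z})\}$. *)

From HB Require Import structures.
From mathcomp Require Import all_boot all_order all_algebra.
From mathcomp Require Import all_classical all_reals all_analysis.
Set Implicit Arguments. Unset Strict Implicit. Unset Printing Implicit Defensive.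
Import Order.TTheory GRing.Theory Num.Theory.
Import numFieldNormedType.Exports.
Local Open Scope classical_set_scope.
Local Open Scope ring_scope.

Definition xc (R : realType) (x : 'rV[R]_2) : R := x ord0 ord0.
Definition yc (R : realType) (x : 'rV[R]_2) : R := x ord0 ord_max.

Definition bdry (R : realType) (A : set 'rV[R]_2) : set 'rV[R]_2 :=
  closure A `\` interior A.

Definition conv_pts (R : realType) (N : nat) (p : 'I_N -> 'rV[R]_2)
  (B : 'I_N -> Prop) : set 'rV[R]_2 :=
  [set x | exists c : 'I_N -> R,
     (forall i, 0 <= c i) /\ (forall i, ~ B i -> c i = 0) /\
     \sum_i c i = 1 /\ x = \sum_i c i *: p i].

Definition inK (R : realType) (t1 t2 t3 : R) : Prop :=
  0 <= t1 /\ 0 <= t2 /\ t3 ^+ 2 <= 2 * t1 * t2.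

Definition nonnegv (R : realType) (k : nat) (v : 'cV[R]_k) : Prop :=
  forall i, 0 <= v i ord0.

Definition dotv (R : realType) (k : nat) (a b : 'cV[R]_k) : R :=
  \sum_i a i ord0 * b i ord0.

Section Discrete.
Variable R : realType.
Variables (nbar n m : nat).
(* X = {p 0, ..., p (nbar-1)} *)
Variable p : 'I_nbar -> 'rV[R]_2.
(* enumeration chi of the interior points X \ dOmega *)
Variable chi : 'I_n -> 'I_nbar.
(* enumeration k |-> {chim k, chip k} of unordered pairs *)
Variables chim chip : 'I_m -> 'I_nbar.
(* the discrete load f_X, given by its value at each point of X *)
Variable fX : 'I_nbar -> R.

Definition dx (k : 'I_m) : R := xc (p (chip k)) - xc (p (chim k)).
Definition dy (k : 'I_m) : R := yc (p (chip k)) - yc (p (chim k)).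

Definition ell (k : 'I_m) : R := Num.sqrt (dx k ^+ 2 + dy k ^+ 2).
Definition lvec : 'cV[R]_m := \col_k ell k.

Definition fvec : 'cV[R]_n := \col_i fX (chi i).

(* value at chi_+(k) minus value at chi_-(k) of the function on X
   (vanishing on the boundary) associated with the i-th unit vector *)
Definition incid (k : 'I_m) (i : 'I_n) : R :=
  (chip k == chi i)%:R - (chim k == chi i)%:R.

Definition B1 : 'M[R]_(m, n) := \matrix_(k, i) (incid k i * dx k / ell k).
Definition B2 : 'M[R]_(m, n) := \matrix_(k, i) (incid k i * dy k / ell k).
Definition Dm : 'M[R]_(m, n) := \matrix_(k, i) incid k i.

Definition P_feasible (s q r : 'cV[R]_m) : Prop :=
  nonnegv s /\ nonnegv r /\
  B1^T *m s = 0 /\ B2^T *m s = 0 /\ Dm^T *m q = fvec /\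
  (forall k, inK (r k ord0) (s k ord0) (q k ord0)).

Definition P_obj (s r : 'cV[R]_m) : R := dotv lvec s + 2 * dotv lvec r.

Definition P_solves (s q r : 'cV[R]_m) : Prop :=
  P_feasible s q r /\
  forall s' q' r', P_feasible s' q' r' -> P_obj s r <= P_obj s' r'.

Definition D_feasible (u1 u2 w : 'cV[R]_n) (t1 t2 t3 : 'cV[R]_m) : Prop :=
  nonnegv t1 /\ nonnegv t2 /\
  t2 + B1 *m u1 + B2 *m u2 = lvec /\ t3 + Dm *m w = 0 /\ t1 = 2 *: lvec /\
  (forall k, inK (t1 k ord0) (t2 k ord0) (t3 k ord0)).

Definition D_obj (w : 'cV[R]_n) : R := dotv fvec w.

Definition D_solves (u1 u2 w : 'cV[R]_n) : Prop :=
  exists t1 t2 t3, D_feasible u1 u2 w t1 t2 t3 /\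
  forall u1' u2' w' t1' t2' t3', D_feasible u1' u2' w' t1' t2' t3' ->
    D_obj w' <= D_obj w.

Definition ZX : R :=
  inf [set v : R | exists s q r, P_feasible s q r /\ v = P_obj s r].

Definition Delta (z : 'cV[R]_n) (k : 'I_m) : R := (Dm *m z) k ord0 / ell k.
Definition Jkk (z : 'cV[R]_n) (k : 'I_m) : R := Num.sqrt (1 + Delta z k ^+ 2).
Definition Jmat (z : 'cV[R]_n) : 'M[R]_m := diag_mx (\row_k Jkk z k).
Definition lhat (z : 'cV[R]_n) (k : 'I_m) : R := Jkk z k * ell k.

Definition MVGS_feasible (z : 'cV[R]_n) (sh : 'cV[R]_m) : Prop :=
  let s := \col_k (sh k ord0 / Jkk z k) in
  let q := \col_k (Delta z k * sh k ord0 / Jkk z k) in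
  nonnegv sh /\ B1^T *m s = 0 /\ B2^T *m s = 0 /\ Dm^T *m q = fvec.

Definition MVGS_obj (z : 'cV[R]_n) (sh : 'cV[R]_m) : R :=
  \sum_k lhat z k * sh k ord0.

Definition MVGS_solves (z : 'cV[R]_n) (sh : 'cV[R]_m) : Prop :=
  MVGS_feasible z sh /\
  forall z' sh', MVGS_feasible z' sh' -> MVGS_obj z sh <= MVGS_obj z' sh'.

Definition Vmin : R :=
  inf [set v : R | exists z sh, MVGS_feasible z sh /\ v = MVGS_obj z sh].

End Discrete.

(* Weak duality between (P_X) and (P_X^* ) is an identity: the duality gap is a
   sum of pairings of second-order cone elements, each nonnegative.  Strong
   duality follows from the optimality of both given solutions by a first-order
   argument on the dual.  By Farkas' lemma, either the load is a nonnegative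
   combination of the gradients of the active dual constraints, which produces
   a point of (P_X) of value f^T w, or some direction increases f^T w; tilted
   towards the strictly feasible dual point 0 it keeps all dual constraints
   satisfied for small steps, contradicting optimality.  With a zero gap every
   cone pairing vanishes, which forces q_k = Delta_k(w/2) s_k.  The change of
   variables s_hat = J(z) s then sends this primal solution to an (MVGS_X)
   point whose value is at most the primal optimum, while every (MVGS_X) point
   comes from a (P_X) point of the same value. *)

From HB Require Import structures.
From mathcomp Require Import all_boot all_order all_algebra.
From mathcomp Require Import all_classical all_reals all_analysis.
From mathcomp Require Import ring lra.
Import Order.TTheory GRing.Theory Num.Theory.
Import numFieldNormedType.Exports.
Local Open Scope classical_set_scope.
Local Open Scope ring_scope.

Set Implicit Arguments. Unset Strict Implicit.

Section Farkas.
Variables (R : realFieldType) (V : lmodType R) (dot : V -> V -> R).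
Hypothesis dotDl : forall x y z, dot (x + y) z = dot x z + dot y z.
Hypothesis dotZl : forall a x z, dot (a *: x) z = a * dot x z.
Hypothesis dotDr : forall x y z, dot z (x + y) = dot z x + dot z y.
Hypothesis dotZr : forall a x z, dot z (a *: x) = a * dot z x.
Hypothesis dot_separates : forall b, b != 0 -> exists y, 0 < dot y b.

Let dotBl x y z : dot (x - y) z = dot x z - dot y z.
Proof. by rewrite -scaleN1r dotDl dotZl mulN1r. Qed.

Let dotBr x y z : dot z (x - y) = dot z x - dot z y.
Proof. by rewrite -scaleN1r dotDr dotZr mulN1r. Qed.

Definition farkas_alternative (I : eqType) (s : seq I) (A : I -> V) (b : V) :=
  (exists c : I -> R, (forall i, 0 <= c i) /\ b = \sum_(i <- s) c i *: A i) \/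
  (exists y, (forall i, i \in s -> dot y (A i) <= 0) /\ 0 < dot y b).

(* Induction on the generators: if a separating [y] for the other generators
   fails on [A i], project everything along [A i] (Fourier-Motzkin). *)
Lemma farkas (I : eqType) (s : seq I) (A : I -> V) (b : V) :
  uniq s -> farkas_alternative s A b.
Proof.
elim: s A b => [|i s IH] A b; rewrite /farkas_alternative.
  move=> _; have [->|/dot_separates [y Hy]] := eqVneq b 0; last by right; exists y.
  by left; exists (fun=> 0); rewrite big_nil.
move=> /= /andP [i_notin_s uniq_s].
have drop_i c0 (c : I -> R) : \sum_(j <- s) (if j == i then c0 else c j) *: A j =
    \sum_(j <- s) c j *: A j.
  by apply: eq_big_seq => j js; case: eqP => // ji; rewrite -ji js in i_notin_s.
case: (IH A b uniq_s) => [[c [c_ge0 ->]]|[y [y_le0 y_gt0]]].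
  left; exists (fun j => if j == i then 0 else c j); split.
    by move=> j; case: eqP.
  by rewrite big_cons eqxx scale0r add0r drop_i.
have [yAi_le0|yAi_gt0] := lerP (dot y (A i)) 0.
  by right; exists y; split=> // j; rewrite inE => /orP [/eqP ->|/y_le0].
set al := dot y (A i).
pose A' j := al *: A j - dot y (A j) *: A i.
pose b' := al *: b - dot y b *: A i.
have al_neq0 : al != 0 by rewrite gt_eqF.
case: (IH A' b' uniq_s) => [[mu [mu_ge0 b'E]]|[y' [y'_le0 y'_gt0]]].
  pose ka := (dot y b - \sum_(j <- s) mu j * dot y (A j)) / al.
  left; exists (fun j => if j == i then ka else mu j); split.
    move=> j; case: eqP => _ //; apply: divr_ge0; last exact: ltW.
    rewrite subr_ge0 (le_trans _ (ltW y_gt0)) // big_seq.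
    by apply: sumr_le0 => k ks; rewrite mulr_ge0_le0 // y_le0.
  rewrite big_cons eqxx drop_i; apply: (scalerI al_neq0).
  rewrite scalerDr scalerA mulrC divfK // -[al *: b](subrK (dot y b *: A i)) -/b' b'E.
  rewrite scalerBl scaler_sumr scaler_suml addrC -addrA; congr (_ + _).
  rewrite -sumrN -big_split /=; apply: eq_bigr => j _.
  by rewrite /A' scalerBr !scalerA addrC (mulrC al).
right; exists (al *: y' - dot y' (A i) *: y); split.
  move=> j; rewrite inE => /orP [/eqP ->|js].
    by rewrite dotBl !dotZl /al mulrC subrr.
  by move: (y'_le0 j js); rewrite /A' dotBr !dotZr dotBl !dotZl (mulrC (dot y (A j))).
by move: y'_gt0; rewrite /b' dotBr !dotZr dotBl !dotZl (mulrC (dot y b)).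
Qed.

End Farkas.

Section SecondOrderCone.
Variable R : realType.

Lemma inK_pairing_ge0 (r s q a b c : R) :
  inK r s q -> inK a b c -> 0 <= r * a + s * b + q * c.
Proof.
move=> [r_ge0 [s_ge0 hq]] [a_ge0 [b_ge0 hc]].
have ra_ge0 : 0 <= r * a by rewrite mulr_ge0.
have sb_ge0 : 0 <= s * b by rewrite mulr_ge0.
have qc_sqr : (q * c) ^+ 2 <= 4 * (r * a) * (s * b).
  rewrite exprMn (le_trans (ler_pM _ _ hq hc)) ?sqr_ge0 //; lra.
have : `|q * c| <= r * a + s * b.
  rewrite -ler_sqr ?nnegrE ?addr_ge0 // real_normK ?num_real //.
  have := sqr_ge0 (r * a - s * b); lra.
have := ler_norm (- (q * c)); rewrite normrN; lra.
Qed.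

Lemma inK_pairing_eq0 (r s q a b c : R) :
  inK r s q -> inK a b c -> r * a + s * b + q * c = 0 -> q * a = - (c * s).
Proof.
move=> [r_ge0 [s_ge0 hq]] [a_ge0 [b_ge0 hc]] pairing0.
have sa_ge0 : 0 <= s * a by rewrite mulr_ge0.
have : (q * a + c * s) ^+ 2 <= 2 * (s * a) * (r * a + s * b + q * c).
  have h1 : q ^+ 2 * a ^+ 2 <= 2 * r * s * a ^+ 2 by rewrite ler_wpM2r ?sqr_ge0.
  have h2 : c ^+ 2 * s ^+ 2 <= 2 * a * b * s ^+ 2 by rewrite ler_wpM2r ?sqr_ge0.
  have -> : (q * a + c * s) ^+ 2 =
    q ^+ 2 * a ^+ 2 + 2 * (q * c) * (s * a) + c ^+ 2 * s ^+ 2 by ring.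
  have -> : 2 * (s * a) * (r * a + s * b + q * c) =
    2 * r * s * a ^+ 2 + 2 * (q * c) * (s * a) + 2 * a * b * s ^+ 2 by ring.
  lra.
rewrite pairing0 mulr0 => sqr_le0.
by apply/eqP; rewrite -addr_eq0 -sqrf_eq0 eq_le sqr_le0 sqr_ge0.
Qed.

Lemma inK_slope (r s d : R) : inK r s (d * s) -> d ^+ 2 * s <= 2 * r.
Proof.
move=> [r_ge0 [s_ge0 hq]]; have [<-|s_neq0] := eqVneq 0 s; first by rewrite mulr0; lra.
have s_gt0 : 0 < s by rewrite lt_neqAle s_neq0.
by rewrite -(ler_pM2r s_gt0); move: hq; rewrite exprMn; lra.
Qed.

End SecondOrderCone.

Lemma near0_quadratic_ge0 (R : realType) (a b c : R) : 0 <= a -> (0 < a \/ 0 < b) ->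
  \forall x \near 0^'+, 0 <= a + b * x - c * x ^+ 2.
Proof.
have id_cvg : x @[x --> (0 : R)^'+] --> 0 by exact: cvg_at_right_filter cvg_id.
have slope_cvg : b - c * x @[x --> 0^'+] --> b.
  rewrite -[X in _ --> X]subr0 -[X in _ --> _ - X](mulr0 c).
  by apply: cvgB; [exact: cvg_cst | apply: cvgM id_cvg; exact: cvg_cst].
have quadE x : a + b * x - c * x ^+ 2 = a + x * (b - c * x) by ring.
move=> a_ge0 [a_gt0|b_gt0]; near=> x; rewrite quadE.
  apply: ltW; near: x; apply: cvgr_gt a_gt0.
  rewrite -[X in _ --> X]addr0 -[X in _ --> _ + X](mul0r b).
  by apply: cvgD; [exact: cvg_cst | exact: cvgM id_cvg slope_cvg].
apply: addr_ge0 => //; apply: mulr_ge0; apply: ltW; near: x.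
  exact: nbhs_right_gt.
exact: cvgr_gt slope_cvg _ b_gt0.
Unshelve. all: by end_near. Qed.

Section DotProduct.
Variable R : realType.

Lemma dotvE k (a b : 'cV[R]_k) : dotv a b = (a^T *m b) 0 0.
Proof. by rewrite mxE; apply: eq_bigr => i _; rewrite mxE. Qed.

Lemma dotvC k (a b : 'cV[R]_k) : dotv a b = dotv b a.
Proof. by apply: eq_bigr => i _; rewrite mulrC. Qed.

Lemma dotv0l k (a : 'cV[R]_k) : dotv 0 a = 0.
Proof. by rewrite dotvE trmx0 mul0mx mxE. Qed.

Lemma dotv0r k (a : 'cV[R]_k) : dotv a 0 = 0.
Proof. by rewrite dotvC dotv0l. Qed.

Lemma dotvDr k (a b c : 'cV[R]_k) : dotv a (b + c) = dotv a b + dotv a c.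
Proof. by rewrite !dotvE mulmxDr mxE. Qed.

Lemma dotvZr k x (a b : 'cV[R]_k) : dotv a (x *: b) = x * dotv a b.
Proof. by rewrite !dotvE -scalemxAr mxE. Qed.

Lemma dotvNr k (a b : 'cV[R]_k) : dotv a (- b) = - dotv a b.
Proof. by rewrite -scaleN1r dotvZr mulN1r. Qed.

Lemma dotvBr k (a b c : 'cV[R]_k) : dotv a (b - c) = dotv a b - dotv a c.
Proof. by rewrite dotvDr dotvNr. Qed.

Lemma dotvDl k (a b c : 'cV[R]_k) : dotv (a + b) c = dotv a c + dotv b c.
Proof. by rewrite dotvC dotvDr !(dotvC c). Qed.

Lemma dotvZl k x (a b : 'cV[R]_k) : dotv (x *: a) b = x * dotv a b.
Proof. by rewrite dotvC dotvZr dotvC. Qed.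

Lemma dotv_ge0 k (a : 'cV[R]_k) : 0 <= dotv a a.
Proof. by apply: sumr_ge0 => i _; rewrite -expr2 sqr_ge0. Qed.

Lemma dotv_gt0 k (a : 'cV[R]_k) : a != 0 -> 0 < dotv a a.
Proof.
move=> a_neq0; rewrite lt_neqAle dotv_ge0 andbT eq_sym.
apply: contra a_neq0 => /eqP a2_eq0; apply/eqP/matrixP => i j; rewrite (ord1 j) mxE.
have sqr_entry_ge0 i' : 0 <= a i' 0 * a i' 0 by rewrite -expr2 sqr_ge0.
by apply/eqP; rewrite -sqrf_eq0 expr2 (psumr_eq0P _ a2_eq0).
Qed.

Lemma dotv_trmx k l (A : 'M[R]_(k, l)) a b : dotv (A^T *m a) b = dotv a (A *m b).
Proof. by rewrite !dotvE trmx_mul trmxK mulmxA. Qed.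

Lemma dotv_row k l (A : 'M[R]_(k, l)) i x : dotv x (row i A)^T = (A *m x) i 0.
Proof. by rewrite dotvC dotvE trmxK -row_mul mxE. Qed.

Lemma trmx_mulmx_sum k l (A : 'M[R]_(k, l)) (v : 'cV[R]_k) :
  A^T *m v = \sum_i v i 0 *: (row i A)^T.
Proof.
apply/matrixP => i j; rewrite (ord1 j) !mxE summxE; apply: eq_bigr => a _.
by rewrite !mxE mulrC.
Qed.

Lemma mulmx_lincombE k l (A : 'M[R]_(k, l)) (x y : 'cV[R]_l) e i :
  (A *m (x + e *: y)) i 0 = (A *m x) i 0 + e * (A *m y) i 0.
Proof. by rewrite mulmxDr -scalemxAr !mxE. Qed.

Definition dotv3 n (x y : 'cV[R]_n * 'cV[R]_n * 'cV[R]_n) : R :=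
  dotv x.1.1 y.1.1 + dotv x.1.2 y.1.2 + dotv x.2 y.2.

Lemma farkas_dotv3 n (I : eqType) (s : seq I) A b : uniq s ->
  farkas_alternative (@dotv3 n) s A b.
Proof.
apply: farkas => [x y z|a x z|x y z|a x z|[[x1 x2] x3] x_neq0].
- by rewrite /dotv3 !dotvDl; ring.
- by rewrite /dotv3 !dotvZl; ring.
- by rewrite /dotv3 !dotvDr; ring.
- by rewrite /dotv3 !dotvZr; ring.
exists (x1, x2, x3); rewrite /dotv3 /=.
have := dotv_ge0 x1; have := dotv_ge0 x2; have := dotv_ge0 x3.
have [x1_0|/dotv_gt0] := eqVneq x1 0; last lra.
have [x2_0|/dotv_gt0] := eqVneq x2 0; last lra.
have [x3_0|/dotv_gt0] := eqVneq x3 0; last lra.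
by move: x_neq0; rewrite x1_0 x2_0 x3_0 eqxx.
Qed.

End DotProduct.

Section ConicDuality.
Variables (R : realType) (n m : nat) (B1 B2 D : 'M[R]_(m, n)).
Variables (l : 'cV[R]_m) (f : 'cV[R]_n).
Hypothesis l_gt0 : forall k, 0 < l k 0.

Definition primal_feasible (s q r : 'cV[R]_m) : Prop :=
  nonnegv s /\ nonnegv r /\
  B1^T *m s = 0 /\ B2^T *m s = 0 /\ D^T *m q = f /\
  (forall k, inK (r k 0) (s k 0) (q k 0)).

Definition primal_obj (s r : 'cV[R]_m) : R := dotv l s + 2 * dotv l r.

Definition primal_optimal (s q r : 'cV[R]_m) : Prop :=
  primal_feasible s q r /\
  forall s' q' r', primal_feasible s' q' r' -> primal_obj s r <= primal_obj s' r'.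

Definition dual_feasible (u1 u2 w : 'cV[R]_n) (t1 t2 t3 : 'cV[R]_m) : Prop :=
  nonnegv t1 /\ nonnegv t2 /\
  t2 + B1 *m u1 + B2 *m u2 = l /\ t3 + D *m w = 0 /\ t1 = 2 *: l /\
  (forall k, inK (t1 k 0) (t2 k 0) (t3 k 0)).

(* Eliminating the slacks, the cone constraint k of the dual reads
   [dual_residual u1 u2 w k >= 0]. *)
Definition dual_residual (u1 u2 w : 'cV[R]_n) (k : 'I_m) : R :=
  4 * l k 0 * (l k 0 - (B1 *m u1) k 0 - (B2 *m u2) k 0) - (D *m w) k 0 ^+ 2.

Definition dual_optimal (u1 u2 w : 'cV[R]_n) : Prop :=
  (forall k, 0 <= dual_residual u1 u2 w k) /\
  forall u1' u2' w', (forall k, 0 <= dual_residual u1' u2' w' k) ->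
    dotv f w' <= dotv f w.

Definition dual_slope (w : 'cV[R]_n) (k : 'I_m) : R := (D *m w) k 0 / (2 * l k 0).

Lemma dual_slopeE w k : (D *m w) k 0 = 2 * l k 0 * dual_slope w k.
Proof. by rewrite mulrC divfK // mulf_neq0 ?pnatr_eq0 ?gt_eqF. Qed.

Lemma dual_feasible_residual_ge0 u1 u2 w t1 t2 t3 :
  dual_feasible u1 u2 w t1 t2 t3 -> forall k, 0 <= dual_residual u1 u2 w k.
Proof.
move=> [_ [_ [t2E [t3E [-> t_inK]]]]] k; have [_ [_ t3_sqr]] := t_inK k.
have := congr1 (fun v : 'cV[R]_m => v k 0) t2E.
have := congr1 (fun v : 'cV[R]_m => v k 0) t3E.
rewrite /dual_residual !mxE in t3_sqr * => t3k t2k; nra.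
Qed.

Lemma residual_ge0_dual_feasible u1 u2 w :
  (forall k, 0 <= dual_residual u1 u2 w k) ->
  dual_feasible u1 u2 w (2 *: l) (l - B1 *m u1 - B2 *m u2) (- (D *m w)).
Proof.
move=> res_ge0.
have l2_ge0 k : 0 <= (2 *: l) k 0 by rewrite mxE mulr_ge0 // ltW.
have t2_ge0 k : 0 <= (l - B1 *m u1 - B2 *m u2) k 0.
  have := res_ge0 k; have := l_gt0 k; have := sqr_ge0 ((D *m w) k 0).
  rewrite /dual_residual !mxE; nra.
do 2 split => //; split; first by rewrite addrAC !subrK.
split; first exact: addNr.
split => // k; do 2 split => //.
by have := res_ge0 k; rewrite /dual_residual !mxE; nra.
Qed.

Lemma dual_solution_optimal u1 u2 w :
  (exists t1 t2 t3, dual_feasible u1 u2 w t1 t2 t3 /\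
    forall u1' u2' w' t1' t2' t3', dual_feasible u1' u2' w' t1' t2' t3' ->
      dotv f w' <= dotv f w) ->
  dual_optimal u1 u2 w.
Proof.
move=> [t1 [t2 [t3 [feas w_opt]]]]; split; first exact: dual_feasible_residual_ge0 feas.
by move=> u1' u2' w' /residual_ge0_dual_feasible; apply: w_opt.
Qed.

Lemma duality_gap s q r u1 u2 w t1 t2 t3 :
  primal_feasible s q r -> dual_feasible u1 u2 w t1 t2 t3 ->
  primal_obj s r - dotv f w = dotv r t1 + dotv s t2 + dotv q t3.
Proof.
move=> [_ [_ [B1s [B2s [Dq _]]]]] [_ [_ [t2E [t3E [-> _]]]]].
have -> : t2 = l - B1 *m u1 - B2 *m u2 by rewrite -t2E addrAC !addrK.
have -> : t3 = - (D *m w) by apply/eqP; rewrite -addr_eq0 t3E.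
rewrite !dotvBr dotvNr dotvZr -!dotv_trmx B1s B2s Dq !dotv0l.
by rewrite /primal_obj (dotvC s) (dotvC r); ring.
Qed.

Lemma primal_of_active_combination u1 u2 w (lam : 'cV[R]_m) :
  nonnegv lam -> (forall k, lam k 0 * dual_residual u1 u2 w k = 0) ->
  B1^T *m lam = 0 -> B2^T *m lam = 0 ->
  D^T *m (\col_k (lam k 0 * dual_slope w k)) = f ->
  exists2 r, primal_feasible lam (\col_k (lam k 0 * dual_slope w k)) r &
             primal_obj lam r = dotv f w.
Proof.
move=> lam_ge0 lam_active B1lam B2lam Dlam.
pose r : 'cV[R]_m := \col_k (lam k 0 * dual_slope w k ^+ 2 / 2).
exists r.
  have r_ge0 k : 0 <= r k 0.
    by rewrite mxE divr_ge0 // mulr_ge0 ?sqr_ge0 //; exact: lam_ge0.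
  split => //; split; first exact: r_ge0.
  do 3 split => //; move=> k; split; first exact: r_ge0.
  by split => //; rewrite !mxE le_eqVlt; apply/orP; left; apply/eqP; field.
have lam_l k : l k 0 * lam k 0 = lam k 0 * (B1 *m u1) k 0 +
    lam k 0 * (B2 *m u2) k 0 + lam k 0 * (l k 0 * dual_slope w k ^+ 2).
  have : 4 * l k 0 * (l k 0 * lam k 0 - (lam k 0 * (B1 *m u1) k 0 +
      lam k 0 * (B2 *m u2) k 0 + lam k 0 * (l k 0 * dual_slope w k ^+ 2))) = 0.
    by rewrite -(lam_active k) /dual_residual dual_slopeE; ring.
  by move/eqP; rewrite mulf_eq0 gt_eqF ?mulr_gt0 //= subr_eq0 => /eqP.
have lam_B (u : 'cV[R]_n) (B : 'M[R]_(m, n)) :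
    B^T *m lam = 0 -> \sum_k lam k 0 * (B *m u) k 0 = 0.
  by move=> Blam; rewrite -[LHS]/(dotv lam (B *m u)) -dotv_trmx Blam dotv0l.
rewrite -Dlam dotv_trmx /primal_obj /dotv.
under eq_bigr do rewrite lam_l.
rewrite !big_split /= lam_B // lam_B // !add0r mulr_sumr -big_split /=.
by apply: eq_bigr => k _; rewrite dual_slopeE !mxE; field.
Qed.

Lemma dual_residual_lineE (u1 u2 w h1 h2 h3 : 'cV[R]_n) x k :
  dual_residual (u1 + x *: h1) (u2 + x *: h2) (w + x *: h3) k =
  dual_residual u1 u2 w k
  - (4 * l k 0 * ((B1 *m h1) k 0 + (B2 *m h2) k 0) + 2 * (D *m w) k 0 * (D *m h3) k 0) * x
  - (D *m h3) k 0 ^+ 2 * x ^+ 2.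
Proof. by rewrite /dual_residual !mulmx_lincombE; ring. Qed.

(* [0] is strictly dual feasible: tilting [d] towards it makes the first-order
   change of every active residual positive, and keeps [d] an ascent direction. *)
Lemma no_dual_ascent (u1 u2 w d1 d2 d3 : 'cV[R]_n) : dual_optimal u1 u2 w ->
  (forall k, dual_residual u1 u2 w k = 0 ->
     (B1 *m d1) k 0 + (B2 *m d2) k 0 + dual_slope w k * (D *m d3) k 0 <= 0) ->
  dotv f d3 <= 0.
Proof.
move=> [res_ge0 w_opt] d_active; rewrite leNgt; apply/negP => fd_gt0.
have norm_fw_ge0 := normr_ge0 (dotv f w).
pose del := dotv f d3 / (`|dotv f w| + 1).
have del_gt0 : 0 < del by rewrite divr_gt0 //; lra.
have ascent : 0 < dotv f d3 - del * dotv f w.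
  have : del * (`|dotv f w| + 1) = dotv f d3 by rewrite divfK // gt_eqF //; lra.
  have := ler_wpM2l (ltW del_gt0) (ler_norm (dotv f w)); lra.
pose h1 := d1 - del *: u1; pose h2 := d2 - del *: u2; pose h3 := d3 - del *: w.
pose b k := - (4 * l k 0 * ((B1 *m h1) k 0 + (B2 *m h2) k 0) +
  2 * (D *m w) k 0 * (D *m h3) k 0).
have res_or_b_gt0 k : 0 < dual_residual u1 u2 w k \/ 0 < b k.
  have [res0|res_neq0] := eqVneq (dual_residual u1 u2 w k) 0; last first.
    by left; rewrite lt_neqAle eq_sym res_neq0 res_ge0.
  right; have := d_active k res0; set S := _ + _ + _ => S_le0.
  have tiltE (M : 'M[R]_(m, n)) (d v : 'cV[R]_n) :
      (M *m (d - del *: v)) k 0 = (M *m d) k 0 - del * (M *m v) k 0.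
    by rewrite -scaleNr mulmx_lincombE mulNr.
  have -> : b k = 4 * l k 0 * (- S) +
      del * (4 * l k 0 ^+ 2 + (D *m w) k 0 ^+ 2) - del * dual_residual u1 u2 w k.
    by rewrite /b /h1 /h2 /h3 /S /dual_residual !tiltE (dual_slopeE w k); ring.
  have lS_ge0 : 0 <= 4 * l k 0 * (- S) by rewrite mulr_ge0 ?mulr_ge0 ?oppr_ge0 // ltW.
  have : 0 < del * (4 * l k 0 ^+ 2 + (D *m w) k 0 ^+ 2).
    by rewrite mulr_gt0 // ltr_pwDl ?sqr_ge0 // mulr_gt0 // exprn_gt0.
  rewrite res0; lra.
have never : \forall x \near (0 : R)^'+, False.
  near=> x.
  have /w_opt : forall k,
      0 <= dual_residual (u1 + x *: h1) (u2 + x *: h2) (w + x *: h3) k.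
    near: x; apply: filter_forall => k.
    have := near0_quadratic_ge0 ((D *m h3) k 0 ^+ 2) (res_ge0 k) (res_or_b_gt0 k).
    by apply: filterS => x; rewrite dual_residual_lineE /b mulNr.
  rewrite dotvDr dotvZr /h3 dotvBr dotvZr.
  have x_gt0 : 0 < x by near: x; exact: nbhs_right_gt.
  have := mulr_gt0 x_gt0 ascent; lra.
by have [] := filter_ex never.
Unshelve. all: by end_near. Qed.

Lemma strong_duality s q r u1 u2 w : primal_optimal s q r -> dual_optimal u1 u2 w ->
  primal_obj s r <= dotv f w.
Proof.
move=> [_ s_opt] w_opt; have [res_ge0 _] := w_opt.
(* [A k] is [-1 / (4 l_k)] times the gradient of the k-th residual in [(u1, u2, w)]. *)
pose A k := ((row k B1)^T, (row k B2)^T, dual_slope w k *: (row k D)^T).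
pose active := [seq k <- index_enum 'I_m | dual_residual u1 u2 w k == 0].
have [[c [c_ge0 fE]]|[[[d1 d2] d3] [d_active fd_gt0]]] :=
  farkas_dotv3 A (0, 0, f) (filter_uniq _ (index_enum_uniq 'I_m) : uniq active).
  pose lam : 'cV[R]_m := \col_k (if dual_residual u1 u2 w k == 0 then c k else 0).
  have {}fE : (0, 0, f) = \sum_k lam k 0 *: A k.
    rewrite fE big_filter big_mkcond; apply: eq_bigr => k _.
    by rewrite mxE; case: ifP; rewrite ?scale0r.
  have B1lam : B1^T *m lam = 0.
    by rewrite trmx_mulmx_sum; have := congr1 (fun x => x.1.1) fE; rewrite /= !raddf_sum.
  have B2lam : B2^T *m lam = 0.
    by rewrite trmx_mulmx_sum; have := congr1 (fun x => x.1.2) fE; rewrite /= !raddf_sum.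
  have Dlam : D^T *m (\col_k (lam k 0 * dual_slope w k)) = f.
    rewrite trmx_mulmx_sum; have := congr1 snd fE; rewrite /= raddf_sum => ->.
    by apply: eq_bigr => k _; rewrite mxE -scalerA.
  have lam_active k : lam k 0 * dual_residual u1 u2 w k = 0.
    by rewrite mxE; case: eqP => [->|]; rewrite ?mulr0 ?mul0r.
  have lam_ge0 : nonnegv lam by move=> k; rewrite mxE; case: ifP.
  have [r' lam_feas <-] :=
    primal_of_active_combination lam_ge0 lam_active B1lam B2lam Dlam.
  exact: s_opt lam_feas.
exfalso; move: fd_gt0; rewrite /dotv3 /= !dotv0r !add0r dotvC ltNge => /negP; apply.
apply: (no_dual_ascent (d1 := d1) (d2 := d2) w_opt) => k k_active.
have := d_active k; rewrite mem_filter k_active eqxx mem_index_enum.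
by rewrite /dotv3 /= dotvZr !dotv_row; apply.
Qed.

Lemma complementary_slackness s q r u1 u2 w :
  primal_optimal s q r -> dual_optimal u1 u2 w ->
  forall k, q k 0 = dual_slope w k * s k 0.
Proof.
move=> s_opt w_opt k; have [s_feas _] := s_opt; have [res_ge0 _] := w_opt.
have w_feas := residual_ge0_dual_feasible res_ge0.
have [_ [_ [_ [_ [_ s_inK]]]]] := s_feas; have [_ [_ [_ [_ [_ t_inK]]]]] := w_feas.
pose pairing i := r i 0 * (2 *: l) i 0 + s i 0 * (l - B1 *m u1 - B2 *m u2) i 0 +
  q i 0 * (- (D *m w)) i 0.
have pairing_ge0 i : 0 <= pairing i := inK_pairing_ge0 (s_inK i) (t_inK i).
have pairing_sum0 : \sum_i pairing i = 0.
  apply/eqP; rewrite eq_le sumr_ge0 // andbT !big_split /=.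
  by rewrite -(duality_gap s_feas w_feas) subr_le0 (strong_duality s_opt w_opt).
have pairing0 := psumr_eq0P (fun i _ => pairing_ge0 i) pairing_sum0 (i := k) isT.
have := inK_pairing_eq0 (s_inK k) (t_inK k) pairing0.
rewrite [(2 *: l) k 0]mxE [X in - (X * _)]mxE mulNr opprK => align.
by rewrite /dual_slope mulrAC -align mulfK // mulf_neq0 ?pnatr_eq0 ?gt_eqF.
Qed.

End ConicDuality.

Section GraphSurface.
Variables (R : realType) (nbar n m : nat) (p : 'I_nbar -> 'rV[R]_2).
Variables (chi : 'I_n -> 'I_nbar) (chim chip : 'I_m -> 'I_nbar) (fX : 'I_nbar -> R).

Local Notation ell := (ell p chim chip).
Local Notation Delta := (Delta p chi chim chip).
Local Notation Jkk := (Jkk p chi chim chip).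
Local Notation Jmat := (Jmat p chi chim chip).
Local Notation P_feasible := (P_feasible p chi chim chip fX).
Local Notation P_obj := (P_obj p chim chip).
Local Notation MVGS_feasible := (MVGS_feasible p chi chim chip fX).
Local Notation MVGS_obj := (MVGS_obj p chi chim chip).

Lemma ell_gt0 : injective p -> (forall k, chim k <> chip k) -> forall k, 0 < ell k.
Proof.
move=> p_inj pair_neq k; rewrite sqrtr_gt0 lt_neqAle addr_ge0 ?sqr_ge0 // andbT.
apply/negP => /eqP/esym/eqP; rewrite paddr_eq0 ?sqr_ge0 // !sqrf_eq0 subr_eq0.
rewrite subr_eq0 => /andP [/eqP dx0 /eqP dy0]; apply: (pair_neq k); apply: p_inj.
apply/matrixP => i j; rewrite (ord1 i).
have [->|->] : j = ord0 \/ j = ord_max.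
  by case: j => [[|[|//]] ?]; [left|right]; apply: val_inj.
- exact: esym dx0.
- exact: esym dy0.
Qed.

Lemma Jkk_gt0 z k : 0 < Jkk z k.
Proof. by rewrite sqrtr_gt0; have := sqr_ge0 (Delta z k); lra. Qed.

Lemma Jkk_sqr z k : Jkk z k ^+ 2 = 1 + Delta z k ^+ 2.
Proof. by rewrite sqr_sqrtr // addr_ge0 ?sqr_ge0. Qed.

Lemma Jmat_mulE z (s : 'cV[R]_m) k : (Jmat z *m s) k 0 = Jkk z k * s k 0.
Proof. by rewrite mul_diag_mx !mxE. Qed.

Lemma primal_of_MVGS_feasible z sh : MVGS_feasible z sh ->
  exists s q r, P_feasible s q r /\ MVGS_obj z sh = P_obj s r.
Proof.
move=> [sh_ge0 [B1s [B2s Dq]]].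
pose s : 'cV[R]_m := \col_k (sh k 0 / Jkk z k).
have s_ge0 k : 0 <= s k 0 by rewrite mxE divr_ge0 // ltW // Jkk_gt0.
have J_neq0 k : Jkk z k != 0 by rewrite gt_eqF // Jkk_gt0.
exists s, (\col_k (Delta z k * sh k 0 / Jkk z k)), (\col_k (Delta z k ^+ 2 * s k 0 / 2)).
split.
  have r_ge0 k : 0 <= (\col_k (Delta z k ^+ 2 * s k 0 / 2)) k 0.
    by rewrite mxE divr_ge0 // mulr_ge0 ?sqr_ge0.
  do 5 split => //; move=> k; do 2 split => //.
  by rewrite !mxE le_eqVlt; apply/orP; left; apply/eqP; field.
rewrite /MVGS_obj /P_obj /dotv mulr_sumr -big_split; apply: eq_bigr => k _.
rewrite /lhat /= !mxE; have := Jkk_sqr z k.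
move: (Jkk z k) (Delta z k) (J_neq0 k) => J d J0 J2.
have -> : d ^+ 2 = J ^+ 2 - 1 by rewrite J2 [1 + _]addrC addrK.
by field.
Qed.

Lemma Delta_half w k :
  Delta ((2%:R)^-1 *: w) k = dual_slope (Dm R chi chim chip) (lvec p chim chip) w k.
Proof. by rewrite /Delta /dual_slope -scalemxAr !mxE invfM; ring. Qed.

Lemma MVGS_of_aligned_primal z s q r : P_feasible s q r ->
  (forall k, q k 0 = Delta z k * s k 0) ->
  MVGS_feasible z (Jmat z *m s) /\ MVGS_obj z (Jmat z *m s) <= P_obj s r.
Proof.
move=> feas align; have [s_ge0 [_ [B1s [B2s [Dq s_inK]]]]] := feas.
have J_neq0 k : Jkk z k != 0 by rewrite gt_eqF // Jkk_gt0.
split.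
  have sE : \col_k ((Jmat z *m s) k 0 / Jkk z k) = s.
    by apply/matrixP => k j; rewrite (ord1 j) mxE Jmat_mulE mulrAC divff ?mul1r.
  have qE : \col_k (Delta z k * (Jmat z *m s) k 0 / Jkk z k) = q.
    apply/matrixP => k j; rewrite (ord1 j) mxE Jmat_mulE align.
    by rewrite mulrCA mulrAC divff ?mul1r.
  rewrite /MVGS_feasible /= sE qE; split => // k.
  by rewrite Jmat_mulE mulr_ge0 // ltW // Jkk_gt0.
rewrite /MVGS_obj /P_obj /dotv mulr_sumr -big_split; apply: ler_sum => k _.
rewrite /lhat /= Jmat_mulE !mxE.
have ell_ge0 : 0 <= ell k := sqrtr_ge0 _.
have := s_inK k; rewrite align => /inK_slope /(ler_wpM2l ell_ge0).
have -> : Jkk z k * ell k * (Jkk z k * s k 0) = ell k * s k 0 * Jkk z k ^+ 2 by ring.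
rewrite Jkk_sqr; lra.
Qed.

End GraphSurface.

Lemma inf_eq_min (R : realType) (E : set R) x :
  E x -> (forall y, E y -> x <= y) -> inf E = x.
Proof.
move=> Ex x_lb; apply/eqP; rewrite eq_le lb_le_inf ?andbT //; last by exists x.
by apply: ge_inf Ex; exists x.
Qed.

Theorem theorem6p2 (R : realType) (Omega : set 'rV[R]_2)
  (nbar n m : nat) (p : 'I_nbar -> 'rV[R]_2) (chi : 'I_n -> 'I_nbar)
  (chim chip : 'I_m -> 'I_nbar) (fX : 'I_nbar -> R)
  (* Omega is a bounded domain *)
  (HOopen : open Omega) (HOconn : connected Omega) (HOne : Omega !=set0)
  (HObdd : bounded_set Omega)
  (* X = range p is a finite subset of the closure of Omega *)
  (Hpinj : injective p) (HX : forall x, closure Omega (p x))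
  (* chi enumerates X \ dOmega *)
  (Hchiinj : injective chi)
  (Hchi : forall x, (exists i, chi i = x) <-> ~ bdry Omega (p x))
  (* k |-> {chim k, chip k} enumerates the unordered pairs of distinct points *)
  (Hm : m = ((nbar * (nbar - 1)) %/ 2)%N)
  (Hpair_ne : forall k, chim k <> chip k)
  (Hpair : forall a b : 'I_nbar, a <> b ->
     exists k, (chim k = a /\ chip k = b) \/ (chim k = b /\ chip k = a))
  (Hpair_inj : forall k k', [set chim k; chip k] = [set chim k'; chip k'] -> k = k')
  (* X \ dOmega lies in int(conv(X cap dOmega)) *)
  (Hconv : forall x, ~ bdry Omega (p x) ->
     interior (conv_pts p (fun y => bdry Omega (p y))) (p x))
  (s q r : 'cV[R]_m) (u1 u2 w : 'cV[R]_n)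
  (HP : P_solves p chi chim chip fX s q r)
  (HD : D_solves p chi chim chip fX u1 u2 w) :
  let z := (2%:R)^-1 *: w in
  let sh := Jmat p chi chim chip z *m s in
  MVGS_solves p chi chim chip fX z sh /\
  Vmin p chi chim chip fX = ZX p chi chim chip fX.
Proof.
(* The geometric hypotheses serve in the paper only to ensure that (P_X) and
   (P_X^* ) have solutions; here solutions are given. *)
move=> z sh; have [s_feas s_opt] := HP.
have l_gt0 k : 0 < lvec p chim chip k 0 by rewrite mxE (ell_gt0 Hpinj Hpair_ne).
have w_opt : dual_optimal (B1 p chi chim chip) (B2 p chi chim chip) (Dm R chi chim chip)
    (lvec p chim chip) (fvec chi fX) u1 u2 w := dual_solution_optimal l_gt0 HD.
have align k : q k 0 = Delta p chi chim chip z k * s k 0.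
  by rewrite Delta_half (complementary_slackness l_gt0 HP w_opt).
have [sh_feas sh_le] := MVGS_of_aligned_primal s_feas align.
have P_le z' sh' : MVGS_feasible p chi chim chip fX z' sh' ->
    P_obj p chim chip s r <= MVGS_obj p chi chim chip z' sh'.
  move=> /primal_of_MVGS_feasible [s' [q' [r' [feas' ->]]]].
  exact: s_opt _ _ _ feas'.
have objE : MVGS_obj p chi chim chip z sh = P_obj p chim chip s r.
  by apply/eqP; rewrite eq_le sh_le P_le.
split; first by split => // z' sh' /P_le; rewrite objE.
rewrite /Vmin /ZX !(@inf_eq_min _ _ (P_obj p chim chip s r)) //.
- by exists s, q, r.
- by move=> _ [s' [q' [r' [feas' ->]]]]; exact: s_opt _ _ _ feas'.
- by exists z, sh; rewrite objE.
- by move=> _ [z' [sh' [feas' ->]]]; exact: P_le.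
Qed.
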